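(* Let $q$ be a prime power, $m\ge1$, and let $\mathrm{Tr}:\mathrm{GF}(q^m)\to\mathrm{GF}(q)$, $\mathrm{Tr}(a)=a+a^q+\cdots+a^{q^{m-1}}$, be the trace map. Let $a_0,a_1,\ldots,a_{q-1}\in\mathrm{GF}(q^m)$. Then $\mathrm{Tr}(a_0+\lambda a_1+\lambda^2a_2+\cdots+\lambda^{q-1}a_{q-1})=0$ for all $\lambda\in\mathrm{GF}(q^m)$ if and only if $\mathrm{Tr}(a_0)=0$ and $a_1=a_2=\cdots=a_{q-1}=0$. *)

From mathcomp Require Import all_boot all_algebra all_field.
Set Implicit Arguments. Unset Strict Implicit. Unset Printing Implicit Defensive.
Import GRing.Theory.
Local Open Scope ring_scope.

(* The trace GF(q^m) -> GF(q): Tr(a) = a + a^q + ... + a^(q^(m-1)),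
   computed inside L = GF(q^m) (its values lie in the subfield GF(q)). *)
Definition Tr (L : finFieldType) (q m : nat) (a : L) : L :=
  \sum_(i < m) a ^+ (q ^ i)%N.

From mathcomp Require Import all_boot all_algebra all_field.
Set Implicit Arguments. Unset Strict Implicit. Unset Printing Implicit Defensive.
Local Open Scope ring_scope.
Import GRing.Theory.

(* Since q is a power of the characteristic, x |-> x^(q^j) is additive, so
   Tr (\sum_i lam^i a_i) is the value at lam of the polynomial
   \sum_(j < m, i < q) a_i^(q^j) X^(i q^j), whose degree is below q^m = #|L|.
   If it vanishes on all of L it is zero; for 0 < i < q the exponent i is
   reached only by the term j = 0, so its coefficient a_i is zero. *)

Lemma leq_mul_expn (q k j : nat) : (0 < k)%N -> (0 < j)%N -> (q <= k * q ^ j)%N.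
Proof.
case: q => // q k_gt0; case: j => // j _.
by rewrite expnS mulnCA leq_pmulr // muln_gt0 k_gt0 expn_gt0.
Qed.

Lemma sumr_ord_supp0 (V : nmodType) (n : nat) (F : nat -> V) :
  (0 < n)%N -> (forall i, (0 < i < n)%N -> F i = 0) ->
  \sum_(i < n) F i = F 0%N.
Proof.
case: n => // n _ F0; rewrite big_ord_recl big1 ?addr0 // => i _.
by apply: F0; rewrite /= ltnS ltn_ord.
Qed.

Lemma exprn_sum_pchar (R : comNzSemiRingType) (N : nat) I (r : seq I)
    (P : pred I) (F : I -> R) :
  [pchar R].-nat N -> (\sum_(i <- r | P i) F i) ^+ N = \sum_(i <- r | P i) F i ^+ N.
Proof.
move=> charN; apply: (big_morph (fun x : R => x ^+ N)).
  by move=> x y; rewrite exprDn_pchar.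
by rewrite expr0n; case: N charN.
Qed.

Lemma finIdomain_poly_eq0 (F : finIdomainType) (p : {poly F}) :
  (size p <= #|F|)%N -> (forall x, p.[x] = 0) -> p = 0.
Proof.
move=> size_p p_roots; apply/eqP; apply: contraTT size_p => p_neq0.
rewrite -ltnNge cardE max_poly_roots ?enum_uniq //.
by apply/allP => x _; rewrite /root p_roots.
Qed.

Lemma pchar_nat_prime_power {F : finFieldType} (p k q m : nat) :
  prime p -> q = (p ^ k)%N -> #|F| = (q ^ m)%N -> [pchar F].-nat q.
Proof.
move=> p_pr -> cardF.
by rewrite pnatX pnatE // (@card_finPcharP F p (k * m)) // expnM.
Qed.

Lemma size_sum_leq (R : nzSemiRingType) I (r : seq I) (P : pred I)
    (F : I -> {poly R}) (n : nat) :
  (forall i, P i -> (size (F i) <= n)%N) ->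
  (size (\sum_(i <- r | P i) F i)%R <= n)%N.
Proof.
move=> size_F; apply: (big_ind (fun p : {poly R} => size p <= n)%N) => //.
  by rewrite size_poly0.
by move=> p p' sp sp'; rewrite (leq_trans (size_polyD p p')) // geq_max sp.
Qed.

Section TracePoly.

Variables (L : finFieldType) (q m : nat) (a : nat -> L).

Definition trace_poly : {poly L} :=
  \sum_(j < m) \sum_(i < q) a i ^+ (q ^ j) *: 'X^(i * q ^ j).

Lemma horner_trace_poly (lam : L) : [pchar L].-nat q ->
  trace_poly.[lam] = Tr q m (\sum_(i < q) lam ^+ i * a i).
Proof.
move=> charq; rewrite horner_sum; apply: eq_bigr => j _.
rewrite exprn_sum_pchar ?pnatX ?charq // horner_sum; apply: eq_bigr => i _.
by rewrite hornerZ hornerXn exprMn exprM mulrC.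
Qed.

Lemma size_trace_poly : (size trace_poly <= q ^ m)%N.
Proof.
apply: size_sum_leq => j _; apply: size_sum_leq => i _.
have q_gt0 : (0 < q)%N by apply: leq_ltn_trans (ltn_ord i).
rewrite (leq_trans (size_scale_leq _ _)) // size_polyXn.
rewrite (@leq_trans (q ^ j.+1)) ?leq_pexp2l //.
by rewrite expnS ltn_pmul2r ?expn_gt0 ?q_gt0.
Qed.

Lemma coef_trace_poly (i : nat) : (0 < m)%N -> (0 < i < q)%N ->
  trace_poly`_i = a i.
Proof.
rewrite /trace_poly; case: m => // m' _ /andP[i_gt0 i_ltq].
rewrite coef_sum big_ord_recl [X in _ + X]big1 ?addr0 => [|j _].
  under eq_bigr => k _ do rewrite expn0 expr1 muln1.
  by rewrite -poly_def coef_poly i_ltq.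
rewrite coef_sumMXn big_pred0 // => k; apply/negbTE/eqP => ki.
have k_gt0 : (0 < k)%N by rewrite lt0n; apply: contraTneq i_gt0 => k0; rewrite -ki k0.
by move: i_ltq; rewrite -ki ltnNge leq_mul_expn.
Qed.

End TracePoly.

Theorem lemma2 (L : finFieldType) (q m : nat)
    (hq : exists p k : nat, prime p /\ (0 < k)%N /\ q = (p ^ k)%N)
    (hm : (0 < m)%N) (hL : #|L| = (q ^ m)%N) (a : nat -> L) :
  (forall lam : L, Tr q m (\sum_(i < q) lam ^+ i * a i) = 0) <->
  (Tr q m (a 0%N) = 0 /\ forall i : nat, (0 < i < q)%N -> a i = 0).
Proof.
have [p [k [p_pr [_ q_def]]]] := hq.
have charq : [pchar L].-nat q := pchar_nat_prime_power p_pr q_def hL.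
have q_gt0 : (0 < q)%N by rewrite q_def expn_gt0 prime_gt0.
have sum_head lam : (forall i, (0 < i < q)%N -> lam ^+ i * a i = 0) ->
    \sum_(i < q) lam ^+ i * a i = a 0%N.
  by move=> ?; rewrite (@sumr_ord_supp0 _ q (fun i => lam ^+ i * a i)) // mul1r.
split=> [Tr0 | [Tra0 a_supp0] lam]; last first.
  by rewrite sum_head // => i /a_supp0 ->; rewrite mulr0.
split.
  rewrite -(Tr0 0) sum_head // => i /andP[i_gt0 _].
  by rewrite expr0n gtn_eqF // mul0r.
have trace_poly0 : trace_poly q m a = 0.
  apply: finIdomain_poly_eq0; first by rewrite hL size_trace_poly.
  by move=> lam; rewrite horner_trace_poly.
by move=> i i_range; rewrite -(coef_trace_poly a hm i_range) trace_poly0 coef0.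
Qed.
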